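(* Let $p_U=(p_1,\dots,p_M)$ be a probability distribution on $\{1,\dots,M\}$ with all $p_i>0$, and let $m$ be a positive integer with $m> -\log_2\min_i p_i$. Let $V$ be uniformly distributed on a set of $2^m$ elements (equivalently, $V=(C_1,\dots,C_m)$ with $C_j$ i.i.d. Bernoulli-$\tfrac12$). Then there exists a map $f$ from the $2^m$ values of $V$ to $\{1,\dots,M\}$ such that $U'=f(V)$ has a distribution $p_{U'}$ with every entry a positive integer multiple of $2^{-m}$ and $$D(p_U\,\|\,p_{U'})=\sum_{i=1}^M p_U(i)\ln\frac{p_U(i)}{p_{U'}(i)}\le M\,2^{-m+1}.$$
   Context: $D(\cdot\|\cdot)$ denotes the Kullback–Leibler divergence, here with the natural logarithm. *)

From mathcomp Require Import all_boot all_order all_algebra.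
From mathcomp Require Import all_classical all_reals all_analysis.
Set Implicit Arguments. Unset Strict Implicit. Unset Printing Implicit Defensive.
Import Order.TTheory GRing.Theory Num.Theory.
Local Open Scope ring_scope.

Definition log2 {R : realType} (x : R) : R := ln x / ln 2.

(* Minimum of the entries of a distribution p on 'I_M (entries are <= 1,
   so 1 is a neutral starting value for probability vectors). *)
Definition minp {R : realType} {M : nat} (p : 'I_M -> R) : R :=
  \big[Order.min/1]_(i < M) p i.

(* Distribution of U' = f(V) when V is uniform on 'I_(2^m). *)
Definition pushU {R : realType} {M m : nat} (f : 'I_(2 ^ m) -> 'I_M) (i : 'I_M) : R :=
  #|[set v | f v == i]|%:R / (2%:R ^+ m).

Definition KL {R : realType} {M : nat} (p q : 'I_M -> R) : R :=
  \sum_(i < M) p i * ln (p i / q i).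

(* Take [k_i := floor (2^m p_i)], which is at least 1 because [2^m min_i p_i > 1],
   give the leftover atoms of [2^m] to one symbol, and let [f] hit each [i]
   exactly [k_i] times.  Then [2^m p_i < k_i + 1], so by [ln t <= t - 1] each term
   of the divergence satisfies
   [p_i ln (2^m p_i / k_i) <= p_i (2^m p_i - k_i) / k_i < 2^-m (k_i + 1) / k_i <= 2^-m 2]. *)

From mathcomp Require Import all_boot all_order all_algebra.
From mathcomp Require Import all_classical all_reals all_analysis.
From mathcomp Require Import ring lra.
Set Implicit Arguments. Unset Strict Implicit. Unset Printing Implicit Defensive.
Import Order.TTheory GRing.Theory Num.Theory.

Section FiberCounts.
Variable T : finType.

Lemma count_flatten_nseq_enum (k : T -> nat) (a : pred T) :
  count a (flatten [seq nseq (k i) i | i <- enum T]) = \sum_i a i * k i.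
Proof.
rewrite count_flatten -map_comp sumnE big_map big_enum /=.
by apply: eq_bigr => i _; rewrite /= count_nseq.
Qed.

Lemma exists_fun_card_fibers (N : nat) (x0 : T) (k : T -> nat) :
  \sum_i k i = N -> exists f : 'I_N -> T, forall i, #|[set v | f v == i]| = k i.
Proof.
move=> sum_k; set s := flatten [seq nseq (k i) i | i <- enum T].
have size_s : size s = N.
  rewrite -(count_predT s) count_flatten_nseq_enum -sum_k.
  by apply: eq_bigr => i _; rewrite mul1n.
exists (fun v => nth x0 s v) => i.
rewrite cardsE -sum1_card -(big_mkord (fun v => nth x0 s v == i) (fun _ => 1)) -size_s.
rewrite -(big_nth x0 (fun y => y == i) (fun _ => 1)) sum1_count count_flatten_nseq_enum.
rewrite (bigD1 i) //= eqxx mul1n big1 ?addn0 // => j /negbTE.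
by rewrite eq_sym => ->.
Qed.

Lemma exists_composition_ge (N : nat) (x0 : T) (a : T -> nat) :
  (\sum_i a i <= N)%N -> exists k : T -> nat, \sum_i k i = N /\ forall i, (a i <= k i)%N.
Proof.
move=> sum_a.
exists (fun i => a i + (if i == x0 then N - \sum_j a j else 0))%N; split.
  by rewrite big_split /= -big_mkcond /= big_pred1_eq subnKC.
by move=> i; rewrite leq_addr.
Qed.

End FiberCounts.

Local Open Scope ring_scope.

Section Estimates.
Context {R : realType}.

Lemma mul_ln_ratio_le2 (x k : R) : 0 < x -> 1 <= k -> x < k + 1 -> x * ln (x / k) <= 2.
Proof.
move=> x_gt0 k_ge1 x_lt; have k_gt0 : 0 < k by lra.
set y := x / k.
have y_gt0 : 0 < y by rewrite divr_gt0.
have yk : y * k = x by rewrite /y mulfVK // gt_eqF.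
have y_lt2 : y < 2 by rewrite /y ltr_pdivrMr //; lra.
have ln_y : ln y <= y - 1.
  by have := @le_ln1Dx R (y - 1); rewrite addrCA subrr addr0; apply; lra.
apply: (le_trans (y := x * (y - 1))); first by rewrite ler_pM2l.
nra.
Qed.

Lemma KL_le_of_counts (M : nat) (N : R) (p q : 'I_M -> R) (k : 'I_M -> nat) :
    0 < N -> (forall i, 0 < p i) -> (forall i, 0 < k i)%N ->
    (forall i, N * p i < (k i)%:R + 1) -> (forall i, q i = (k i)%:R / N) ->
  KL p q <= M%:R * N^-1 * 2.
Proof.
move=> N_gt0 p_gt0 k_gt0 Np_lt q_def.
have term_le i : p i * ln (p i / q i) <= 2 / N.
  have -> : p i * ln (p i / q i) = (N * p i) * ln (N * p i / (k i)%:R) / N.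
    rewrite q_def mulrAC [N * _]mulrC mulfK ?gt_eqF //; congr (_ * ln _).
    by field; rewrite !gt_eqF ?ltr0n.
  rewrite ler_pM2r ?invr_gt0 // mul_ln_ratio_le2 ?mulr_gt0 ?ler1n //.
apply: (@le_trans _ _ (\sum_(i < M) 2 / N)); first exact: ler_sum.
by rewrite sumr_const card_ord -(mulr_natl (2 / N)) mulrA mulrAC lexx.
Qed.

Lemma pow2_mul_gt1 (m : nat) (x : R) : 0 < x -> - log2 x < m%:R -> 1 < 2%:R ^+ m * x.
Proof.
move=> x_gt0; have ln2_gt0 : 0 < ln (2 : R) by apply: ln_gt0; lra.
rewrite /log2 -mulNr (ltr_pdivrMr _ _ ln2_gt0) -lnV ?posrE // mulr_natl -lnXn //.
rewrite ltr_ln ?posrE ?invr_gt0 ?exprn_gt0 // => lt.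
by rewrite -(ltr_pM2r x_gt0) mulVf ?gt_eqF // in lt.
Qed.

End Estimates.

Theorem mainTheorem3 (R : realType) (M : nat) (p : 'I_M -> R)
  (hpos : forall i, 0 < p i) (hsum : \sum_(i < M) p i = 1)
  (m : nat) (hm : (0 < m)%N) (hmin : - log2 (minp p) < m%:R) :
  exists f : 'I_(2 ^ m) -> 'I_M,
    (forall i, exists k : nat, (0 < k)%N /\ pushU (R:=R) f i = k%:R / (2%:R ^+ m)) /\
    KL p (pushU (R:=R) f) <= M%:R * (2%:R ^+ m)^-1 * 2%:R.
Proof.
case: M p hpos hsum hmin => [|M] p hpos hsum hmin.
  by move: hsum; rewrite big_ord0 => /eqP; rewrite eq_sym oner_eq0.
set N : R := 2%:R ^+ m.
have N_gt0 : 0 < N by rewrite exprn_gt0.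
have Np_gt1 i : 1 < N * p i.
  have minp_gt0 : 0 < minp p by apply: lt_bigmin => // j _; exact: hpos.
  apply: (lt_le_trans (pow2_mul_gt1 minp_gt0 hmin)).
  by rewrite ler_pM2l // bigmin_le.
pose a i := Num.truncn (N * p i).
have sum_a : (\sum_i a i <= 2 ^ m)%N.
  rewrite -(ler_nat R) natr_sum natrX -/N.
  apply: (@le_trans _ _ (\sum_i N * p i)); last by rewrite -mulr_sumr hsum mulr1.
  by apply: ler_sum => i _; rewrite truncn_le mulr_ge0 // ltW.
have [k [sum_k a_le_k]] := exists_composition_ge ord0 sum_a.
have [f card_f] := exists_fun_card_fibers ord0 sum_k.
have k_gt0 i : (0 < k i)%N by rewrite (leq_trans _ (a_le_k i)) // truncn_gt0 ltW.
have pushU_f i : pushU f i = (k i)%:R / N by rewrite /pushU card_f.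
exists f; split; first by move=> i; exists (k i).
apply: (KL_le_of_counts N_gt0 hpos k_gt0 _ pushU_f) => i.
by rewrite (lt_le_trans (truncnS_gt _)) // -natr1 lerD2r ler_nat a_le_k.
Qed.
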